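(* In the setting below, let $\eta\in\mathbb{C}^V$ satisfy $\mu_p\|\eta\|_p<1$. Then $I+\alpha_0G_0^{V;V}D_\eta$ is invertible, the forward Born series $\sum_{j=1}^\infty K_j(\eta,\dots,\eta)$ converges in $\ell^p(R\times S)$, $\Lambda_\eta=G_0^{R;S}-\sum_{j=1}^\infty K_j(\eta,\dots,\eta)$, and for every $N\ge1$ $$\Big\|\Lambda_\eta-\Big(G_0^{R;S}-\sum_{j=1}^N K_j(\eta,\dots,\eta)\Big)\Big\|_{\ell^p(R\times S)}\le \nu_p\,\|\eta\|_p^{N+1}\mu_p^{N}\,\frac{1}{1-\mu_p\|\eta\|_p}.$$
   Context: Setting: Let $V$ and $\delta V$ be finite disjoint sets (interior and boundary vertices of a graph), let $R,S\subseteq\delta V$ be nonempty (receivers and sources), let $\alpha_0>0$, and let $G_0$ (the background Green's function) be a complex matrix with rows and columns indexed by $V\cup\delta V$. (In the paper, $G_0(x,y)$ is the value at $x$ of the solution of the discrete diffusion equation $Lu+\alpha_0u=f$ on $V$, $L$ the combinatorial Laplacian, with Robin boundary condition $tu+\partial u=g$ on $\delta V$, for a unit source at $y$; only the matrix $G_0$ is used.) For $U,W\subseteq V\cup\delta V$, $G_0^{U;W}$ is the submatrix with rows indexed by $U$ and columns by $W$; for a single vertex $r$, $G_0^{r;V}$ is a row vector and $G_0^{V;s}$ a column vector. For $a\in\mathbb{C}^V$, $D_a$ is the diagonal $V\times V$ matrix with diagonal $a$. For $j\ge1$ define the multilinear map $K_j:(\mathbb{C}^V)^j\to\mathbb{C}^{R\times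 S}$ by $$K_j(\eta_1,\dots,\eta_j)(r,s)=(-1)^{j+1}\alpha_0^{\,j}\,G_0^{r;V}D_{\eta_1}G_0^{V;V}D_{\eta_2}\cdots G_0^{V;V}D_{\eta_j}G_0^{V;s},\qquad r\in R,\ s\in S.$$ Fix $p,q\in[1,\infty]$ with $1/p+1/q=1$; $\|\cdot\|_p$ is the $\ell^p$ norm on $\mathbb{C}^V$ and on $\mathbb{C}^{R\times S}$ (the latter viewed as a vector of length $|R||S|$). Define $$\nu_p=\alpha_0\Big(\sum_{r\in R}\|G_0^{r;V}\|_{\ell^q(V)}^p\Big)^{1/p}\Big(\sum_{s\in S}\|G_0^{V;s}\|_{\ell^q(V)}^p\Big)^{1/p},\qquad \mu_p=\alpha_0\max_{v\in V}\|G_0^{v;V}\|_{\ell^q(V)}$$ (with the usual modification of the outer sums to maxima when $p=\infty$). For a vertex potential $\eta\in\mathbb{C}^V$ such that $I+\alpha_0G_0^{V;V}D_\eta$ is invertible, the Robin-to-Dirichlet map $\Lambda_\eta\in\mathbb{C}^{R\times S}$ (value at receiver $r$ of the solution of the perturbed problem $Lu+\alpha_0(1+\eta)u=0$ with unit Robin source at $s$) is given by $$\Lambda_\eta(r,s)=G_0(r,s)-\alpha_0\,G_0^{r;V}D_\eta\big(I+\alpha_0G_0^{V;V}D_\eta\big)^{-1}G_0^{V;s}.$$ *)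

From Stdlib Require Import Reals List.
Import ListNotations.
Open Scope R_scope.

Definition Cplx : Type := (R * R)%type.
Definition RtoC (x : R) : Cplx := (x, 0).
Definition C0 : Cplx := (0, 0).
Definition C1 : Cplx := (1, 0).
Definition Cadd (z w : Cplx) : Cplx := (fst z + fst w, snd z + snd w).
Definition Copp (z : Cplx) : Cplx := (- fst z, - snd z).
Definition Csub (z w : Cplx) : Cplx := Cadd z (Copp w).
Definition Cmul (z w : Cplx) : Cplx :=
  (fst z * fst w - snd z * snd w, fst z * snd w + snd z * fst w).
Definition Cmod (z : Cplx) : R := sqrt (fst z ^ 2 + snd z ^ 2).

Definition Csum {A : Type} (l : list A) (f : A -> Cplx) : Cplx :=
  fold_right (fun x acc => Cadd (f x) acc) C0 l.
Definition Rsum {A : Type} (l : list A) (f : A -> R) : R :=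
  fold_right (fun x acc => f x + acc) 0 l.
Definition Rmaxl {A : Type} (l : list A) (f : A -> R) : R :=
  fold_right (fun x acc => Rmax (f x) acc) 0 l.

Inductive ext : Type := Fin (a : R) | Infty.

Definition conj_exp (p q : ext) : Prop :=
  match p, q with
  | Fin a, Fin b => 1 < a /\ 1 < b /\ / a + / b = 1
  | Fin a, Infty => a = 1
  | Infty, Fin b => b = 1
  | Infty, Infty => False
  end.

(** real power of a nonnegative number, with 0^a = 0 *)
Definition rpow (x a : R) : R :=
  if Rle_dec x 0 then 0 else Rpower x a.

(** l^p norm of the nonnegative family (f x)_{x in l} (f x = |component|) *)
Definition lpnorm {A : Type} (p : ext) (l : list A) (f : A -> R) : R :=
  match p with
  | Fin a => rpow (Rsum l (fun x => rpow (f x) a)) (/ a)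
  | Infty => Rmaxl l f
  end.

(** Vertices are labelled by natural numbers; V, dV are the (duplicate-free)
    lists of interior and boundary vertices. Matrices/vectors are functions. *)

Definition nu_p (p q : ext) (V R_ S_ : list nat) (alpha0 : R)
    (G0 : nat -> nat -> Cplx) : R :=
  alpha0 * lpnorm p R_ (fun r => lpnorm q V (fun v => Cmod (G0 r v)))
         * lpnorm p S_ (fun s => lpnorm q V (fun v => Cmod (G0 v s))).

Definition mu_p (q : ext) (V : list nat) (alpha0 : R) (G0 : nat -> nat -> Cplx) : R :=
  alpha0 * Rmaxl V (fun v => lpnorm q V (fun w => Cmod (G0 v w))).

(** chain etas s x = (G0^{x;V} D_{eta_1} G0^{V;V} D_{eta_2} ... G0^{V;V} D_{eta_j} G0^{V;s})
    for etas = [eta_1; ...; eta_j]  (and G0 x s for the empty list). *)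
Fixpoint chain (V : list nat) (G0 : nat -> nat -> Cplx) (etas : list (nat -> Cplx))
    (s x : nat) : Cplx :=
  match etas with
  | [] => G0 x s
  | eta :: rest => Csum V (fun v => Cmul (Cmul (G0 x v) (eta v)) (chain V G0 rest s v))
  end.

Definition Kj (V : list nat) (alpha0 : R) (G0 : nat -> nat -> Cplx)
    (etas : list (nat -> Cplx)) (r s : nat) : Cplx :=
  Cmul (RtoC ((-1) ^ (S (length etas)) * alpha0 ^ (length etas)))
       (chain V G0 etas s r).

Fixpoint born_partial (V : list nat) (alpha0 : R) (G0 : nat -> nat -> Cplx)
    (eta : nat -> Cplx) (N : nat) (r s : nat) : Cplx :=
  match N with
  | O => C0
  | S n => Cadd (born_partial V alpha0 G0 eta n r s)
                (Kj V alpha0 G0 (repeat eta (S n)) r s)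
  end.

Definition kron (x y : nat) : Cplx := if Nat.eq_dec x y then C1 else C0.

(** A = I + alpha0 G0^{V;V} D_eta, entries on V x V *)
Definition Amat (alpha0 : R) (G0 : nat -> nat -> Cplx) (eta : nat -> Cplx) (x y : nat) : Cplx :=
  Cadd (kron x y) (Cmul (RtoC alpha0) (Cmul (G0 x y) (eta y))).

Definition is_inverse_on (V : list nat) (A M : nat -> nat -> Cplx) : Prop :=
  (forall x y, In x V -> In y V -> Csum V (fun z => Cmul (A x z) (M z y)) = kron x y) /\
  (forall x y, In x V -> In y V -> Csum V (fun z => Cmul (M x z) (A z y)) = kron x y).

(** Robin-to-Dirichlet map given the inverse M of I + alpha0 G0^{V;V} D_eta:
    Lambda(r,s) = G0(r,s) - alpha0 G0^{r;V} D_eta M G0^{V;s} *)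
Definition Lambda (V : list nat) (alpha0 : R) (G0 : nat -> nat -> Cplx) (eta : nat -> Cplx)
    (M : nat -> nat -> Cplx) (r s : nat) : Cplx :=
  Csub (G0 r s)
    (Cmul (RtoC alpha0)
       (Csum V (fun v => Cmul (Cmul (G0 r v) (eta v))
                              (Csum V (fun u => Cmul (M v u) (G0 u s)))))).

From Pilot Require Import Defs.
From Stdlib Require Import Reals List Lra Lia Psatz Ring.
From Coquelicot Require Complex.
Import ListNotations.
Open Scope R_scope.

(* Let T be the operator w |-> (x |-> α0 Σ_{u∈V} G0(x,u) η(u) w(u)). Hölder's inequality gives
   |T w (x)| <= α0 ‖G0^{x;V}‖_q ‖η‖_p sup_V |w|, so on functions on V the operator T is a
   contraction of ratio t = μ_p ‖η‖_p < 1 for the sup norm. Hence the Neumann series Σ_k (-T)^k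
   inverts I + T = I + α0 G0^{V;V} D_η, K_j(η,…,η)(r,s) = T((-T)^{j-1} G0^{V;s})(r), and
   Λ_η(r,s) = G0(r,s) - T m_s (r) where (I + T) m_s = G0^{V;s}. The Born remainder is T applied
   to m_s - Σ_{j<N} (-T)^j G0^{V;s} = (-T)^N m_s, whose sup norm is at most
   t^N ‖G0^{V;s}‖_q / (1 - t); the last application of T at the receiver r and the ℓ^p norm over
   R × S produce the factor ν_p ‖η‖_p. *)

(* [Reals] exports an unrelated [C1], hence the qualified [Defs.C1]. *)
Lemma Cplx_ring_theory : ring_theory C0 Defs.C1 Cadd Cmul Csub Copp (@eq Cplx).
Proof.
  split; intros; apply injective_projections; cbv [Csub Cadd Copp Cmul C0 Defs.C1]; simpl; ring.
Qed.

Add Ring Cplx_ring : Cplx_ring_theory.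

Lemma RtoC_mul x y : RtoC (x * y) = Cmul (RtoC x) (RtoC y).
Proof. apply injective_projections; cbv [RtoC Cmul]; simpl; ring. Qed.

Lemma RtoC_opp x : RtoC (- x) = Copp (RtoC x).
Proof. apply injective_projections; cbv [RtoC Copp]; simpl; ring. Qed.

Lemma RtoC_1 : RtoC 1 = Defs.C1.
Proof. reflexivity. Qed.

(* [Cplx] and its operations are definitionally those of Coquelicot's [Complex.C]. *)
Lemma Cmod_ge0 z : 0 <= Cmod z.
Proof. exact (Complex.Cmod_ge_0 z). Qed.

Lemma Cmod_Cadd_le z w : Cmod (Cadd z w) <= Cmod z + Cmod w.
Proof. exact (Complex.Cmod_triangle z w). Qed.

Lemma Cmod_Cmul z w : Cmod (Cmul z w) = Cmod z * Cmod w.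
Proof. exact (Complex.Cmod_mult z w). Qed.

Lemma Cmod_Copp z : Cmod (Copp z) = Cmod z.
Proof. exact (Complex.Cmod_opp z). Qed.

Lemma Cmod_RtoC x : Cmod (RtoC x) = Rabs x.
Proof. exact (Complex.Cmod_R x). Qed.

Lemma Cmod_C0 : Cmod C0 = 0.
Proof. exact Complex.Cmod_0. Qed.

Lemma Cmod_C1 : Cmod Defs.C1 = 1.
Proof. exact Complex.Cmod_1. Qed.

Lemma Cmod_Csub_le z w : Cmod (Csub z w) <= Cmod z + Cmod w.
Proof. unfold Csub; rewrite <- (Cmod_Copp w); apply Cmod_Cadd_le. Qed.

Lemma Cmod_Csub_sym z w : Cmod (Csub z w) = Cmod (Csub w z).
Proof. rewrite <- Cmod_Copp; f_equal; ring. Qed.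

Lemma Rabs_fst_le_Cmod z : Rabs (fst z) <= Cmod z.
Proof.
  pose proof (Complex.Rmax_Cmod z); pose proof (Rmax_l (Rabs (fst z)) (Rabs (snd z))).
  change (Rabs (fst z) <= Complex.Cmod z); lra.
Qed.

Lemma Rabs_snd_le_Cmod z : Rabs (snd z) <= Cmod z.
Proof.
  pose proof (Complex.Rmax_Cmod z); pose proof (Rmax_r (Rabs (fst z)) (Rabs (snd z))).
  change (Rabs (snd z) <= Complex.Cmod z); lra.
Qed.

Lemma Cmod_kron_le x y : Cmod (kron x y) <= 1.
Proof. unfold kron; destruct (Nat.eq_dec x y); [rewrite Cmod_C1 | rewrite Cmod_C0]; lra. Qed.

Lemma kron_sym x y : kron x y = kron y x.
Proof. unfold kron; destruct (Nat.eq_dec x y), (Nat.eq_dec y x); congruence. Qed.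

Section FiniteSums.
Context {A : Type}.

Lemma Csum_ext_in (l : list A) f g :
  (forall x, In x l -> f x = g x) -> Csum l f = Csum l g.
Proof.
  induction l as [|a l IH]; intros H; simpl; [reflexivity|].
  rewrite (H a), IH; simpl; auto; intros; apply H; simpl; auto.
Qed.

Lemma Csum_C0 (l : list A) : Csum l (fun _ => C0) = C0.
Proof. induction l as [|a l IH]; simpl; [|rewrite IH]; ring. Qed.

Lemma Csum_add (l : list A) f g :
  Csum l (fun x => Cadd (f x) (g x)) = Cadd (Csum l f) (Csum l g).
Proof. induction l as [|a l IH]; simpl; [|rewrite IH]; ring. Qed.

Lemma Csum_opp (l : list A) f : Csum l (fun x => Copp (f x)) = Copp (Csum l f).
Proof. induction l as [|a l IH]; simpl; [|rewrite IH]; ring. Qed.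

Lemma Csum_mul_l (l : list A) c f :
  Csum l (fun x => Cmul c (f x)) = Cmul c (Csum l f).
Proof. induction l as [|a l IH]; simpl; [|rewrite IH]; ring. Qed.

Lemma Csum_mul_r (l : list A) c f :
  Csum l (fun x => Cmul (f x) c) = Cmul (Csum l f) c.
Proof. induction l as [|a l IH]; simpl; [|rewrite IH]; ring. Qed.

Lemma Cmod_Csum_le (l : list A) f : Cmod (Csum l f) <= Rsum l (fun x => Cmod (f x)).
Proof.
  induction l as [|a l IH]; simpl; [rewrite Cmod_C0; lra|].
  eapply Rle_trans; [apply Cmod_Cadd_le | lra].
Qed.

Lemma Rsum_nonneg (l : list A) f : (forall x, In x l -> 0 <= f x) -> 0 <= Rsum l f.
Proof.
  induction l as [|a l IH]; intros H; simpl; [lra|].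
  pose proof (H a (or_introl eq_refl)); pose proof (IH (fun x Hx => H x (or_intror Hx))); lra.
Qed.

Lemma Rsum_le (l : list A) f g : (forall x, In x l -> f x <= g x) -> Rsum l f <= Rsum l g.
Proof.
  induction l as [|a l IH]; intros H; simpl; [lra|].
  pose proof (H a (or_introl eq_refl)); pose proof (IH (fun x Hx => H x (or_intror Hx))); lra.
Qed.

Lemma Rsum_ext_in (l : list A) f g : (forall x, In x l -> f x = g x) -> Rsum l f = Rsum l g.
Proof. intros H; apply Rle_antisym; apply Rsum_le; intros x Hx; rewrite H; auto; lra. Qed.

Lemma Rsum_0 (l : list A) : Rsum l (fun _ => 0) = 0.
Proof. induction l as [|a l IH]; simpl; [|rewrite IH]; ring. Qed.

Lemma Rsum_add (l : list A) f g : Rsum l (fun x => f x + g x) = Rsum l f + Rsum l g.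
Proof. induction l as [|a l IH]; simpl; [|rewrite IH]; ring. Qed.

Lemma Rsum_mul_l (l : list A) c f : Rsum l (fun x => c * f x) = c * Rsum l f.
Proof. induction l as [|a l IH]; simpl; [|rewrite IH]; ring. Qed.

Lemma Rsum_app (l1 l2 : list A) f : Rsum (l1 ++ l2) f = Rsum l1 f + Rsum l2 f.
Proof. induction l1 as [|a l IH]; simpl; [|rewrite IH]; ring. Qed.

Lemma elem_le_Rsum (l : list A) f x :
  (forall y, In y l -> 0 <= f y) -> In x l -> f x <= Rsum l f.
Proof.
  induction l as [|a l IH]; intros H Hx; simpl; [destruct Hx|].
  pose proof (H a (or_introl eq_refl)).
  pose proof (Rsum_nonneg l f (fun y Hy => H y (or_intror Hy))).
  destruct Hx as [<-|Hx]; [lra|].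
  pose proof (IH (fun y Hy => H y (or_intror Hy)) Hx); lra.
Qed.

Lemma Rmaxl_ge0 (l : list A) f : 0 <= Rmaxl l f.
Proof.
  induction l as [|a l IH]; simpl; [lra|].
  eapply Rle_trans; [apply IH | apply Rmax_r].
Qed.

Lemma elem_le_Rmaxl (l : list A) f x : In x l -> f x <= Rmaxl l f.
Proof.
  induction l as [|a l IH]; intros Hx; simpl; [destruct Hx|].
  destruct Hx as [<-|Hx]; [apply Rmax_l|].
  eapply Rle_trans; [apply IH; auto | apply Rmax_r].
Qed.

Lemma Rmaxl_lub (l : list A) f c :
  0 <= c -> (forall x, In x l -> f x <= c) -> Rmaxl l f <= c.
Proof.
  induction l as [|a l IH]; intros Hc H; simpl; [assumption|].
  apply Rmax_lub; [apply H; simpl; auto | apply IH; auto; intros; apply H; simpl; auto].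
Qed.

End FiniteSums.

Lemma Csum_swap {A B : Type} (l1 : list A) (l2 : list B) f :
  Csum l1 (fun x => Csum l2 (fun y => f x y)) = Csum l2 (fun y => Csum l1 (fun x => f x y)).
Proof.
  induction l1 as [|a l IH]; simpl; [now rewrite Csum_C0|].
  now rewrite IH, <- Csum_add.
Qed.

Lemma Rsum_map {A B : Type} (l : list B) (h : B -> A) f : Rsum (map h l) f = Rsum l (fun x => f (h x)).
Proof. induction l as [|a l IH]; simpl; [|rewrite IH]; reflexivity. Qed.

Lemma Rsum_list_prod {A B : Type} (l1 : list A) (l2 : list B) f :
  Rsum (list_prod l1 l2) f = Rsum l1 (fun x => Rsum l2 (fun y => f (x, y))).
Proof. induction l1 as [|a l IH]; simpl; [|rewrite Rsum_app, Rsum_map, IH]; reflexivity. Qed.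


Lemma Csum_kron_l (l : list nat) x f :
  NoDup l -> In x l -> Csum l (fun z => Cmul (kron x z) (f z)) = f x.
Proof.
  induction 1 as [|a l Ha Hl IH]; intros Hx; [destruct Hx|]; simpl.
  unfold kron at 1; destruct (Nat.eq_dec x a) as [<-|ne].
  - rewrite (Csum_ext_in _ _ (fun _ => C0)), Csum_C0; [ring|].
    intros z Hz; unfold kron; destruct (Nat.eq_dec x z) as [<-|]; [contradiction | ring].
  - destruct Hx as [->|Hx]; [congruence|].
    rewrite IH by exact Hx; ring.
Qed.

Lemma Csum_kron_r (l : list nat) y f :
  NoDup l -> In y l -> Csum l (fun z => Cmul (f z) (kron z y)) = f y.
Proof.
  intros Hl Hy; rewrite <- (Csum_kron_l l y f Hl Hy).
  apply Csum_ext_in; intros z _; rewrite kron_sym; ring.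
Qed.

Lemma rpow_ge0 x a : 0 <= rpow x a.
Proof. unfold rpow; destruct (Rle_dec x 0); [lra | left; apply exp_pos]. Qed.

Lemma rpow_le0 x a : x <= 0 -> rpow x a = 0.
Proof. intros; unfold rpow; destruct (Rle_dec x 0); [reflexivity | lra]. Qed.

Lemma rpow_Rpower x a : 0 < x -> rpow x a = Rpower x a.
Proof. intros; unfold rpow; destruct (Rle_dec x 0); [lra | reflexivity]. Qed.

Lemma rpow_gt0 x a : 0 < x -> 0 < rpow x a.
Proof. intros; rewrite rpow_Rpower by assumption; apply exp_pos. Qed.

Lemma rpow_1 x : 0 <= x -> rpow x 1 = x.
Proof.
  intros Hx; destruct (Req_dec x 0) as [->|nx]; [now apply rpow_le0; lra|].
  rewrite rpow_Rpower by lra; apply Rpower_1; lra.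
Qed.

Lemma rpow_mult x y a : 0 <= x -> 0 <= y -> rpow (x * y) a = rpow x a * rpow y a.
Proof.
  intros Hx Hy.
  destruct (Req_dec x 0) as [->|nx]; [rewrite Rmult_0_l, rpow_le0 by lra; ring|].
  destruct (Req_dec y 0) as [->|ny]; [rewrite Rmult_0_r, (rpow_le0 0) by lra; ring|].
  rewrite !rpow_Rpower by nra; symmetry; apply Rpower_mult_distr; lra.
Qed.

Lemma rpow_rpow x a b : 0 <= x -> rpow (rpow x a) b = rpow x (a * b).
Proof.
  intros Hx; destruct (Req_dec x 0) as [->|nx]; [now rewrite !(rpow_le0 0) by lra|].
  rewrite (rpow_Rpower x), !rpow_Rpower by (try apply exp_pos; lra); apply Rpower_mult.
Qed.

Lemma rpow_rpow_inv x a : 0 <= x -> a <> 0 -> rpow (rpow x a) (/ a) = x.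
Proof. intros; rewrite rpow_rpow, Rinv_r by assumption; now apply rpow_1. Qed.

Lemma rpow_le x y a : 0 <= x -> x <= y -> 0 < a -> rpow x a <= rpow y a.
Proof.
  intros Hx Hxy Ha; destruct (Req_dec x 0) as [->|nx].
  - rewrite rpow_le0 by lra; apply rpow_ge0.
  - rewrite !rpow_Rpower by lra; apply Rle_Rpower_l; lra.
Qed.

Lemma rpow_div x y a : 0 <= x -> 0 < y -> rpow (x / y) a = rpow x a / rpow y a.
Proof.
  intros Hx Hy; unfold Rdiv.
  rewrite rpow_mult by (auto; left; apply Rinv_0_lt_compat; lra); f_equal.
  rewrite !rpow_Rpower by (auto; apply Rinv_0_lt_compat; lra).
  unfold Rpower; rewrite ln_Rinv, <- exp_Ropp by lra; f_equal; ring.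
Qed.

(* Jensen for [exp], from the tangent line [1 + (u - m) <= exp (u - m)] at the mean [m]. *)
Lemma exp_convex t u v : 0 <= t <= 1 ->
  exp (t * u + (1 - t) * v) <= t * exp u + (1 - t) * exp v.
Proof.
  intros Ht; set (m := t * u + (1 - t) * v).
  assert (Eu : exp u = exp m * exp (u - m)) by (rewrite <- exp_plus; f_equal; ring).
  assert (Ev : exp v = exp m * exp (v - m)) by (rewrite <- exp_plus; f_equal; ring).
  pose proof (exp_ineq1_le (u - m)); pose proof (exp_ineq1_le (v - m)); pose proof (exp_pos m).
  rewrite Eu, Ev.
  assert (t * exp m * (1 + (u - m)) <= t * exp m * exp (u - m)) by (apply Rmult_le_compat_l; nra).
  assert ((1 - t) * exp m * (1 + (v - m)) <= (1 - t) * exp m * exp (v - m))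
    by (apply Rmult_le_compat_l; nra).
  assert (t * (1 + (u - m)) + (1 - t) * (1 + (v - m)) = 1) by (unfold m; ring).
  nra.
Qed.

Lemma young x y a b : 0 <= x -> 0 <= y -> 1 < a -> 1 < b -> / a + / b = 1 ->
  x * y <= rpow x a / a + rpow y b / b.
Proof.
  intros Hx Hy Ha Hb Hab.
  assert (0 < / a < 1)
    by (split; [apply Rinv_0_lt_compat | rewrite <- Rinv_1; apply Rinv_lt_contravar]; lra).
  assert (0 <= rpow x a / a) by (apply Rmult_le_pos; [apply rpow_ge0 | lra]).
  assert (0 <= rpow y b / b) by (apply Rmult_le_pos; [apply rpow_ge0 | lra]).
  destruct (Req_dec x 0) as [->|nx]; [lra|]; destruct (Req_dec y 0) as [->|ny]; [lra|].
  rewrite !rpow_Rpower by lra; unfold Rpower, Rdiv.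
  replace (x * y) with (exp (/ a * (a * ln x) + (1 - / a) * (b * ln y))).
  - eapply Rle_trans; [apply exp_convex; lra|].
    replace (1 - / a) with (/ b) by lra; right; ring.
  - replace (1 - / a) with (/ b) by lra.
    replace (/ a * (a * ln x) + / b * (b * ln y)) with (ln x + ln y) by (field; lra).
    rewrite exp_plus, !exp_ln by lra; reflexivity.
Qed.

Definition valid_exponent (p : ext) : Prop :=
  match p with Fin a => 0 < a | Infty => True end.

Lemma conj_exp_valid p q : conj_exp p q -> valid_exponent p /\ valid_exponent q.
Proof. destruct p, q; simpl; intros; lra. Qed.

Section LpNorms.
Context {A : Type}.
Implicit Types (l : list A) (f g : A -> R).

Lemma lpnorm_ge0 p l f : 0 <= lpnorm p l f.
Proof. destruct p; simpl; [apply rpow_ge0 | apply Rmaxl_ge0]. Qed.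

Lemma rpow_lpnorm_Fin a l f :
  a <> 0 -> rpow (lpnorm (Fin a) l f) a = Rsum l (fun x => rpow (f x) a).
Proof.
  intros Ha; simpl.
  now rewrite rpow_rpow, Rinv_l, rpow_1 by (auto; apply Rsum_nonneg; intros; apply rpow_ge0).
Qed.

Lemma lpnorm_Fin1 l f : (forall x, In x l -> 0 <= f x) -> lpnorm (Fin 1) l f = Rsum l f.
Proof.
  intros H; simpl; rewrite Rinv_1, rpow_1 by (apply Rsum_nonneg; intros; apply rpow_ge0).
  apply Rsum_ext_in; intros; apply rpow_1; auto.
Qed.

Lemma lpnorm_le p l f g : valid_exponent p ->
  (forall x, In x l -> 0 <= f x <= g x) -> lpnorm p l f <= lpnorm p l g.
Proof.
  intros Hp H; destruct p as [a|]; simpl in *.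
  - apply rpow_le; [apply Rsum_nonneg; intros; apply rpow_ge0 | | now apply Rinv_0_lt_compat].
    apply Rsum_le; intros x Hx; destruct (H x Hx); now apply rpow_le.
  - apply Rmaxl_lub; [apply Rmaxl_ge0|].
    intros x Hx; eapply Rle_trans; [apply H; auto | now apply elem_le_Rmaxl].
Qed.

Lemma lpnorm_scale p l c f : valid_exponent p -> 0 <= c ->
  (forall x, In x l -> 0 <= f x) -> lpnorm p l (fun x => c * f x) = c * lpnorm p l f.
Proof.
  intros Hp Hc H; destruct p as [a|]; simpl in *.
  - rewrite (Rsum_ext_in l _ (fun x => rpow c a * rpow (f x) a)) by (intros; apply rpow_mult; auto).
    rewrite Rsum_mul_l, rpow_mult, rpow_rpow_inv by (try apply rpow_ge0; try apply Rsum_nonneg;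
      intros; try apply rpow_ge0; lra).
    reflexivity.
  - clear H; induction l as [|x l IH]; simpl; [ring|].
    now rewrite IH, RmaxRmult.
Qed.

Lemma elem_le_lpnorm p l f x : valid_exponent p ->
  (forall y, In y l -> 0 <= f y) -> In x l -> f x <= lpnorm p l f.
Proof.
  intros Hp H Hx; destruct p as [a|]; simpl in *.
  - rewrite <- (rpow_rpow_inv (f x) a) by (auto; lra).
    apply rpow_le; [apply rpow_ge0 | | now apply Rinv_0_lt_compat].
    apply (elem_le_Rsum l (fun y => rpow (f y) a)); auto; intros; apply rpow_ge0.
  - now apply elem_le_Rmaxl.
Qed.

(* Young's inequality applied to the normalized families [f / ‖f‖_a] and [g / ‖g‖_b]. *)
Lemma holder_Fin l f g a b : 1 < a -> 1 < b -> / a + / b = 1 ->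
  (forall x, In x l -> 0 <= f x) -> (forall x, In x l -> 0 <= g x) ->
  Rsum l (fun x => f x * g x) <= lpnorm (Fin a) l f * lpnorm (Fin b) l g.
Proof.
  intros Ha Hb Hab Hf Hg.
  set (NA := lpnorm (Fin a) l f); set (NB := lpnorm (Fin b) l g).
  assert (HNA : 0 <= NA) by apply lpnorm_ge0; assert (HNB : 0 <= NB) by apply lpnorm_ge0.
  assert (Hzero : NA = 0 \/ NB = 0 -> Rsum l (fun x => f x * g x) = 0).
  { intros Hz; rewrite (Rsum_ext_in l _ (fun _ => 0)), Rsum_0; [reflexivity|].
    intros x Hx.
    pose proof (elem_le_lpnorm (Fin a) l f x ltac:(simpl; lra) Hf Hx) as Ef.
    pose proof (elem_le_lpnorm (Fin b) l g x ltac:(simpl; lra) Hg Hx) as Eg.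
    pose proof (Hf x Hx); pose proof (Hg x Hx); fold NA in Ef; fold NB in Eg.
    destruct Hz as [Z|Z]; rewrite Z in *;
      [replace (f x) with 0 by lra | replace (g x) with 0 by lra]; ring. }
  destruct (Req_dec NA 0) as [ZA|ZA]; [rewrite Hzero by auto; nra|].
  destruct (Req_dec NB 0) as [ZB|ZB]; [rewrite Hzero by auto; nra|].
  assert (SA : 0 < rpow NA a) by (apply rpow_gt0; lra).
  assert (SB : 0 < rpow NB b) by (apply rpow_gt0; lra).
  apply Rle_trans with (Rsum l (fun x =>
    NA * NB / (a * rpow NA a) * rpow (f x) a + NA * NB / (b * rpow NB b) * rpow (g x) b)).
  - apply Rsum_le; intros x Hx.
    pose proof (young (f x / NA) (g x / NB) a b) as Y.
    rewrite !rpow_div in Y by (auto; lra).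
    replace (f x * g x) with (NA * NB * (f x / NA * (g x / NB))) by (field; lra).
    eapply Rle_trans; [apply Rmult_le_compat_l; [nra | apply Y]|]; auto;
      try (apply Rmult_le_pos; [auto | left; apply Rinv_0_lt_compat; lra]).
    right; field; lra.
  - rewrite Rsum_add, !Rsum_mul_l.
    rewrite <- (rpow_lpnorm_Fin a l f), <- (rpow_lpnorm_Fin b l g) by lra; fold NA NB.
    right; transitivity (NA * NB * (/ a + / b)); [field; lra | rewrite Hab; ring].
Qed.

Lemma holder p q l f g : conj_exp p q ->
  (forall x, In x l -> 0 <= f x) -> (forall x, In x l -> 0 <= g x) ->
  Rsum l (fun x => f x * g x) <= lpnorm q l f * lpnorm p l g.
Proof.
  intros Hpq Hf Hg; destruct p as [a|], q as [b|]; simpl in Hpq.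
  - apply holder_Fin; auto; lra.
  - subst a; rewrite lpnorm_Fin1 by auto; simpl; rewrite <- Rsum_mul_l.
    apply Rsum_le; intros x Hx; apply Rmult_le_compat_r; [auto | now apply elem_le_Rmaxl].
  - subst b; rewrite lpnorm_Fin1 by auto; simpl; rewrite Rmult_comm, <- Rsum_mul_l.
    apply Rsum_le; intros x Hx; rewrite Rmult_comm.
    apply Rmult_le_compat_r; [auto | now apply elem_le_Rmaxl].
  - contradiction.
Qed.

End LpNorms.

Lemma lpnorm_list_prod_le {A B : Type} p (l1 : list A) (l2 : list B) F G :
  valid_exponent p -> (forall x, In x l1 -> 0 <= F x) -> (forall y, In y l2 -> 0 <= G y) ->
  lpnorm p (list_prod l1 l2) (fun xy => F (fst xy) * G (snd xy)) <= lpnorm p l1 F * lpnorm p l2 G.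
Proof.
  intros Hp HF HG; destruct p as [a|]; simpl in *.
  - rewrite Rsum_list_prod; simpl.
    rewrite (Rsum_ext_in l1 _ (fun x => Rsum l2 (fun y => rpow (G y) a) * rpow (F x) a)).
    + rewrite Rsum_mul_l, Rmult_comm, rpow_mult by (apply Rsum_nonneg; intros; apply rpow_ge0).
      lra.
    + intros x Hx; rewrite Rmult_comm, <- Rsum_mul_l.
      apply Rsum_ext_in; intros y Hy; apply rpow_mult; auto.
  - apply Rmaxl_lub; [apply Rmult_le_pos; apply Rmaxl_ge0|].
    intros [x y] Hxy; apply in_prod_iff in Hxy; destruct Hxy as [Hx Hy]; simpl.
    apply Rmult_le_compat; auto; now apply elem_le_Rmaxl.
Qed.

Definition Ccv (u : nat -> Cplx) (l : Cplx) : Prop :=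
  Un_cv (fun n => fst (u n)) (fst l) /\ Un_cv (fun n => snd (u n)) (snd l).

Lemma Ccv_ext u v l : (forall n, u n = v n) -> Ccv u l -> Ccv v l.
Proof.
  intros E [H1 H2]; split; intros eps He;
    [destruct (H1 eps He) as [N HN] | destruct (H2 eps He) as [N HN]];
    exists N; intros n Hn; rewrite <- E; auto.
Qed.

Lemma Ccv_const c : Ccv (fun _ => c) c.
Proof.
  split; intros eps He; exists 0%nat; intros; unfold R_dist; rewrite Rminus_diag, Rabs_R0; auto.
Qed.

Lemma Ccv_add u v a b : Ccv u a -> Ccv v b -> Ccv (fun n => Cadd (u n) (v n)) (Cadd a b).
Proof. intros [H1 H2] [H3 H4]; split; simpl; now apply CV_plus. Qed.

Lemma Ccv_sub u v a b : Ccv u a -> Ccv v b -> Ccv (fun n => Csub (u n) (v n)) (Csub a b).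
Proof. intros [H1 H2] [H3 H4]; split; simpl; apply CV_plus; auto; now apply CV_opp. Qed.

Lemma Ccv_mul u v a b : Ccv u a -> Ccv v b -> Ccv (fun n => Cmul (u n) (v n)) (Cmul a b).
Proof.
  intros [H1 H2] [H3 H4]; split; simpl.
  - apply CV_plus; [now apply CV_mult | apply CV_opp; now apply CV_mult].
  - apply CV_plus; now apply CV_mult.
Qed.

Lemma Ccv_Csum {A : Type} (l : list A) (u : nat -> A -> Cplx) (w : A -> Cplx) :
  (forall x, In x l -> Ccv (fun n => u n x) (w x)) -> Ccv (fun n => Csum l (u n)) (Csum l w).
Proof.
  induction l as [|a l IH]; intros H; simpl; [apply Ccv_const|].
  apply Ccv_add; [apply H; simpl; auto | apply IH; intros; apply H; simpl; auto].
Qed.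

Lemma Ccv_unique u a b : Ccv u a -> Ccv u b -> a = b.
Proof.
  intros [H1 H2] [H3 H4]; apply injective_projections; eapply UL_sequence; eauto.
Qed.

Lemma Ccv_sub_vanishing c u : Ccv u C0 -> Ccv (fun n => Csub c (u n)) c.
Proof.
  intros H; pose proof (Ccv_sub _ _ c C0 (Ccv_const c) H) as K.
  replace (Csub c C0) with c in K by ring; exact K.
Qed.

Lemma geometric_eventually_lt t C eps : 0 <= t < 1 -> 0 <= C -> 0 < eps ->
  exists N, forall n, (n >= N)%nat -> C * t ^ n < eps.
Proof.
  intros Ht HC He.
  destruct (pow_lt_1_zero t) with (y := eps / (C + 1)) as [N HN];
    [rewrite Rabs_right; lra | apply Rdiv_lt_0_compat; lra|].
  exists N; intros n Hn; specialize (HN n Hn).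
  rewrite Rabs_right in HN by (apply Rle_ge, pow_le; lra).
  apply Rle_lt_trans with (C * (eps / (C + 1))); [apply Rmult_le_compat_l; lra|].
  apply Rmult_lt_reg_r with (C + 1); [lra|].
  replace (C * (eps / (C + 1)) * (C + 1)) with (C * eps) by (field; lra); nra.
Qed.

Lemma Un_cv_0_of_geometric_le u t C : 0 <= t < 1 -> 0 <= C ->
  (forall n, Rabs (u n) <= C * t ^ n) -> Un_cv u 0.
Proof.
  intros Ht HC H eps He; destruct (geometric_eventually_lt t C eps Ht HC He) as [N HN].
  exists N; intros n Hn; unfold R_dist; rewrite Rminus_0_r.
  eapply Rle_lt_trans; [apply H | apply HN, Hn].
Qed.

Lemma Ccv_0_of_geometric_le u t C : 0 <= t < 1 -> 0 <= C ->
  (forall n, Cmod (u n) <= C * t ^ n) -> Ccv u C0.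
Proof.
  intros Ht HC H; split; apply (Un_cv_0_of_geometric_le _ t C); auto; intros n.
  - eapply Rle_trans; [apply Rabs_fst_le_Cmod | apply H].
  - eapply Rle_trans; [apply Rabs_snd_le_Cmod | apply H].
Qed.

Fixpoint Cseries (u : nat -> Cplx) (N : nat) : Cplx :=
  match N with
  | O => C0
  | S N => Cadd (Cseries u N) (u N)
  end.

Lemma Cseries_tail_le u t C m d : 0 <= t < 1 -> (forall k, Cmod (u k) <= C * t ^ k) ->
  Cmod (Csub (Cseries u (m + d)) (Cseries u m)) <= C * (t ^ m - t ^ (m + d)) / (1 - t).
Proof.
  intros Ht H; induction d as [|d IH].
  - rewrite Nat.add_0_r, Rminus_diag; replace (Csub _ _) with C0 by ring.
    rewrite Cmod_C0; right; field; lra.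
  - rewrite Nat.add_succ_r; simpl Cseries.
    replace (Csub (Cadd (Cseries u (m + d)) (u (m + d)%nat)) (Cseries u m))
      with (Cadd (Csub (Cseries u (m + d)) (Cseries u m)) (u (m + d)%nat)) by ring.
    eapply Rle_trans; [apply Cmod_Cadd_le|].
    pose proof (H (m + d)%nat).
    replace (C * (t ^ m - t ^ S (m + d)) / (1 - t))
      with (C * (t ^ m - t ^ (m + d)) / (1 - t) + C * t ^ (m + d)) by (simpl; field; lra).
    lra.
Qed.

Lemma Cauchy_crit_of_tail_le (v : nat -> R) t K : 0 <= t < 1 -> 0 <= K ->
  (forall m d, Rabs (v (m + d)%nat - v m) <= K * t ^ m) -> Cauchy_crit v.
Proof.
  intros Ht HK H eps He; destruct (geometric_eventually_lt t K eps Ht HK He) as [N HN].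
  exists N; intros n m Hn Hm; unfold R_dist.
  destruct (Nat.le_ge_cases m n) as [Hmn|Hmn].
  - replace n with (m + (n - m))%nat by lia; eapply Rle_lt_trans; [apply H | apply HN, Hm].
  - rewrite Rabs_minus_sym; replace m with (n + (m - n))%nat by lia.
    eapply Rle_lt_trans; [apply H | apply HN, Hn].
Qed.

Lemma Cseries_cv u t C : 0 <= t < 1 -> 0 <= C -> (forall k, Cmod (u k) <= C * t ^ k) ->
  { l | Ccv (Cseries u) l }.
Proof.
  intros Ht HC H.
  assert (Htail : forall m d,
    Cmod (Csub (Cseries u (m + d)) (Cseries u m)) <= C / (1 - t) * t ^ m).
  { intros m d; eapply Rle_trans; [now apply Cseries_tail_le|].
    pose proof (pow_le t (m + d) (proj1 Ht)).
    assert (0 < / (1 - t)) by (apply Rinv_0_lt_compat; lra).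
    assert (0 <= C * / (1 - t) * t ^ (m + d)) by (apply Rmult_le_pos; [apply Rmult_le_pos|]; lra).
    unfold Rdiv; nra. }
  assert (HK : 0 <= C / (1 - t)) by (apply Rmult_le_pos; [lra | left; apply Rinv_0_lt_compat; lra]).
  destruct (R_complete (fun n => fst (Cseries u n))) as [l1 H1].
  { apply (Cauchy_crit_of_tail_le _ t (C / (1 - t))); auto; intros m d.
    eapply Rle_trans; [apply (Rabs_fst_le_Cmod (Csub _ _)) | apply Htail]. }
  destruct (R_complete (fun n => snd (Cseries u n))) as [l2 H2].
  { apply (Cauchy_crit_of_tail_le _ t (C / (1 - t))); auto; intros m d.
    eapply Rle_trans; [apply (Rabs_snd_le_Cmod (Csub _ _)) | apply Htail]. }
  exists (l1, l2); split; assumption.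
Qed.

Section BornSeries.

Variables (V : list nat) (alpha0 : R) (G0 : nat -> nat -> Cplx) (eta : nat -> Cplx) (p q : ext).
Hypothesis HV : NoDup V.
Hypothesis Halpha : 0 <= alpha0.
Hypothesis Hpq : conj_exp p q.

(* [born_op x w] is [α0 G0^{x;V} D_η w], written exactly like the correction term of [Lambda]. *)
Definition born_op (x : nat) (w : nat -> Cplx) : Cplx :=
  Cmul (RtoC alpha0) (Csum V (fun u => Cmul (Cmul (G0 x u) (eta u)) (w u))).

(* [Amat x u] unfolds to [Cadd (kron x u) (pert_entry x u)]. *)
Definition pert_entry (x u : nat) : Cplx := Cmul (RtoC alpha0) (Cmul (G0 x u) (eta u)).

Lemma born_op_ext x w1 w2 :
  (forall u, In u V -> w1 u = w2 u) -> born_op x w1 = born_op x w2.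
Proof. intros H; unfold born_op; f_equal; apply Csum_ext_in; intros u Hu; now rewrite H. Qed.

Lemma born_op_add x w1 w2 :
  born_op x (fun u => Cadd (w1 u) (w2 u)) = Cadd (born_op x w1) (born_op x w2).
Proof.
  unfold born_op; rewrite (Csum_ext_in V _ (fun u =>
    Cadd (Cmul (Cmul (G0 x u) (eta u)) (w1 u)) (Cmul (Cmul (G0 x u) (eta u)) (w2 u)))) by (intros; ring).
  rewrite Csum_add; ring.
Qed.

Lemma born_op_scale x c w : born_op x (fun u => Cmul c (w u)) = Cmul c (born_op x w).
Proof.
  unfold born_op; rewrite (Csum_ext_in V _ (fun u =>
    Cmul c (Cmul (Cmul (G0 x u) (eta u)) (w u)))) by (intros; ring).
  rewrite Csum_mul_l; ring.
Qed.

Lemma born_op_sub x w1 w2 :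
  born_op x (fun u => Csub (w1 u) (w2 u)) = Csub (born_op x w1) (born_op x w2).
Proof.
  rewrite (born_op_ext x _ (fun u => Cadd (w1 u) (Cmul (Copp Defs.C1) (w2 u)))) by (intros; ring).
  rewrite born_op_add, born_op_scale; ring.
Qed.

Lemma born_op_C0 x : born_op x (fun _ => C0) = C0.
Proof.
  rewrite (born_op_ext x _ (fun _ => Cmul C0 C0)) by (intros; ring).
  rewrite born_op_scale; ring.
Qed.

Lemma born_op_matrix x w : born_op x w = Csum V (fun u => Cmul (pert_entry x u) (w u)).
Proof. unfold born_op, pert_entry; rewrite <- Csum_mul_l; apply Csum_ext_in; intros; ring. Qed.

Lemma born_op_Csum_r x (P : nat -> nat -> Cplx) (b : nat -> Cplx) :
  born_op x (fun u => Csum V (fun z => Cmul (P z u) (b z)))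
  = Csum V (fun z => Cmul (born_op x (P z)) (b z)).
Proof.
  rewrite born_op_matrix.
  rewrite (Csum_ext_in V _ (fun u => Csum V (fun z => Cmul (Cmul (pert_entry x u) (P z u)) (b z)))).
  - rewrite Csum_swap; apply Csum_ext_in; intros z _.
    now rewrite Csum_mul_r, born_op_matrix.
  - intros u _; rewrite <- Csum_mul_l; apply Csum_ext_in; intros; ring.
Qed.

Lemma Amat_apply x w : In x V ->
  Csum V (fun z => Cmul (Amat alpha0 G0 eta x z) (w z)) = Cadd (w x) (born_op x w).
Proof.
  intros Hx; rewrite born_op_matrix, <- (Csum_kron_l V x w HV Hx), <- Csum_add.
  apply Csum_ext_in; intros; unfold Amat, pert_entry; ring.
Qed.

Lemma born_op_le x w X : 0 <= X -> (forall u, In u V -> Cmod (w u) <= X) ->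
  Cmod (born_op x w)
  <= alpha0 * lpnorm q V (fun u => Cmod (G0 x u)) * lpnorm p V (fun u => Cmod (eta u)) * X.
Proof.
  intros HX Hw; destruct (conj_exp_valid p q Hpq) as [Hp Hq].
  unfold born_op; rewrite Cmod_Cmul, Cmod_RtoC, Rabs_right, !Rmult_assoc by lra.
  apply Rmult_le_compat_l; [exact Halpha|].
  eapply Rle_trans; [apply Cmod_Csum_le|].
  apply Rle_trans with (Rsum V (fun u => Cmod (G0 x u) * (X * Cmod (eta u)))).
  - apply Rsum_le; intros u Hu; rewrite !Cmod_Cmul, Rmult_assoc.
    pose proof (Hw u Hu); pose proof (Cmod_ge0 (G0 x u)); pose proof (Cmod_ge0 (eta u)).
    apply Rmult_le_compat_l; [lra | nra].
  - eapply Rle_trans; [apply (holder p q); auto; intros; try apply Rmult_le_pos; auto; apply Cmod_ge0|].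
    rewrite lpnorm_scale by (auto; intros; apply Cmod_ge0); right; ring.
Qed.

Let rate := mu_p q V alpha0 G0 * lpnorm p V (fun v => Cmod (eta v)).

Lemma rate_ge0 : 0 <= rate.
Proof.
  apply Rmult_le_pos; [apply Rmult_le_pos; [exact Halpha | apply Rmaxl_ge0] | apply lpnorm_ge0].
Qed.

Lemma born_op_contract x w X : In x V -> 0 <= X -> (forall u, In u V -> Cmod (w u) <= X) ->
  Cmod (born_op x w) <= rate * X.
Proof.
  intros Hx HX Hw; eapply Rle_trans; [exact (born_op_le x w X HX Hw)|].
  apply Rmult_le_compat_r; [exact HX|]; apply Rmult_le_compat_r; [apply lpnorm_ge0|].
  apply Rmult_le_compat_l; [exact Halpha|].
  apply (elem_le_Rmaxl V (fun v => lpnorm q V (fun w => Cmod (G0 v w)))), Hx.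
Qed.

Fixpoint born_pow (k : nat) (w : nat -> Cplx) : nat -> Cplx :=
  match k with
  | O => w
  | S k => fun x => Copp (born_op x (born_pow k w))
  end.

Definition born_sum (N : nat) (w : nat -> Cplx) (x : nat) : Cplx :=
  Cseries (fun k => born_pow k w x) N.

Lemma born_pow_le k w X x : In x V -> 0 <= X -> (forall u, In u V -> Cmod (w u) <= X) ->
  Cmod (born_pow k w x) <= rate ^ k * X.
Proof.
  intros Hx HX Hw; revert x Hx; induction k as [|k IH]; intros x Hx; simpl.
  - rewrite Rmult_1_l; auto.
  - rewrite Cmod_Copp, Rmult_assoc; apply born_op_contract; auto.
    apply Rmult_le_pos; [apply pow_le, rate_ge0 | exact HX].
Qed.

Lemma born_sum_telescope N w x :
  Cadd (born_sum N w x) (born_op x (born_sum N w)) = Csub (w x) (born_pow N w x).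
Proof.
  revert x; induction N as [|N IH]; intros x.
  - unfold born_sum; simpl; rewrite born_op_C0; ring.
  - change (born_sum (S N) w) with (fun u => Cadd (born_sum N w u) (born_pow N w u)).
    change (born_pow (S N) w x) with (Copp (born_op x (born_pow N w))).
    rewrite born_op_add.
    transitivity (Cadd (Cadd (born_sum N w x) (born_op x (born_sum N w)))
                       (Cadd (born_pow N w x) (born_op x (born_pow N w)))); [ring|].
    rewrite IH; ring.
Qed.

Definition neumann (N : nat) (x y : nat) : Cplx := born_sum N (fun u => kron u y) x.

Lemma Amat_neumann N x y : In x V ->
  Csum V (fun z => Cmul (Amat alpha0 G0 eta x z) (neumann N z y))
  = Csub (kron x y) (born_pow N (fun u => kron u y) x).
Proof. intros Hx; unfold neumann; rewrite Amat_apply by exact Hx.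
  apply (born_sum_telescope N (fun u => kron u y) x).
Qed.

Lemma born_pow_kron_succ k x y : In x V -> In y V ->
  born_pow (S k) (fun u => kron u y) x
  = Csum V (fun z => Cmul (born_pow k (fun u => kron u z) x) (Copp (pert_entry z y))).
Proof.
  intros Hx Hy; revert x Hx; induction k as [|k IH]; intros x Hx.
  - simpl; rewrite born_op_matrix, (Csum_kron_r V y (pert_entry x) HV Hy).
    now rewrite (Csum_kron_l V x (fun z => Copp (pert_entry z y)) HV Hx).
  - change (born_pow (S (S k)) (fun u => kron u y) x)
      with (Copp (born_op x (born_pow (S k) (fun u => kron u y)))).
    rewrite (born_op_ext x _ _ (fun u Hu => IH u Hu)), born_op_Csum_r, <- Csum_opp.
    apply Csum_ext_in; intros z _.
    transitivity (Copp (Cmul (born_op x (born_pow k (fun u => kron u z))) (Copp (pert_entry z y))));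
      [reflexivity | simpl; ring].
Qed.

Lemma neumann_Amat N x y : In x V -> In y V ->
  Csum V (fun z => Cmul (neumann N x z) (Amat alpha0 G0 eta z y))
  = Csub (kron x y) (born_pow N (fun u => kron u y) x).
Proof.
  intros Hx Hy; induction N as [|N IH].
  - unfold neumann, born_sum; simpl.
    rewrite (Csum_ext_in V _ (fun _ => C0)), Csum_C0 by (intros; ring); ring.
  - rewrite (Csum_ext_in V _ (fun z => Cadd (Cmul (neumann N x z) (Amat alpha0 G0 eta z y))
      (Cadd (Cmul (born_pow N (fun u => kron u z) x) (kron z y))
            (Cmul (born_pow N (fun u => kron u z) x) (pert_entry z y)))))
      by (intros; unfold neumann, born_sum, Amat, pert_entry; simpl; ring).
    rewrite !Csum_add, IH, (Csum_kron_r V y (fun z => born_pow N (fun u => kron u z) x) HV Hy).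
    rewrite born_pow_kron_succ by assumption.
    rewrite (Csum_ext_in V (fun z => Cmul _ (Copp _))
      (fun z => Copp (Cmul (born_pow N (fun u => kron u z) x) (pert_entry z y)))) by (intros; ring).
    rewrite Csum_opp; ring.
Qed.

Lemma born_pow_chain j s x :
  born_pow j (fun u => G0 u s) x = Cmul (RtoC ((- alpha0) ^ j)) (chain V G0 (repeat eta j) s x).
Proof.
  revert x; induction j as [|j IH]; intros x; simpl.
  - rewrite RtoC_1; ring.
  - rewrite (born_op_ext x _ _ (fun u _ => IH u)), born_op_scale.
    unfold born_op; rewrite RtoC_mul, RtoC_opp; ring.
Qed.

Lemma Kj_repeat j r s :
  Kj V alpha0 G0 (repeat eta (S j)) r s = born_op r (born_pow j (fun u => G0 u s)).
Proof.
  rewrite (born_op_ext r _ _ (fun u _ => born_pow_chain j s u)), born_op_scale.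
  unfold Kj, born_op; rewrite repeat_length; simpl chain.
  replace ((-1) ^ S (S j) * alpha0 ^ S j) with ((- alpha0) ^ j * alpha0)
    by (replace (- alpha0) with (-1 * alpha0) by ring; rewrite Rpow_mult_distr; simpl; ring).
  rewrite RtoC_mul; ring.
Qed.

Lemma born_partial_eq N r s :
  born_partial V alpha0 G0 eta N r s = born_op r (born_sum N (fun u => G0 u s)).
Proof.
  induction N as [|N IH]; cbn [born_partial].
  - symmetry; apply born_op_C0.
  - rewrite IH, Kj_repeat.
    change (born_sum (S N) (fun u => G0 u s))
      with (fun u => Cadd (born_sum N (fun u => G0 u s) u) (born_pow N (fun u => G0 u s) u)).
    now rewrite born_op_add.
Qed.

Definition mat_apply (M : nat -> nat -> Cplx) (g : nat -> Cplx) (v : nat) : Cplx :=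
  Csum V (fun u => Cmul (M v u) (g u)).

Lemma mat_apply_solves M g v :
  (forall x y, In x V -> In y V -> Csum V (fun z => Cmul (Amat alpha0 G0 eta x z) (M z y)) = kron x y) ->
  In v V -> Cadd (mat_apply M g v) (born_op v (mat_apply M g)) = g v.
Proof.
  intros HM Hv; rewrite <- (Amat_apply v (mat_apply M g) Hv); unfold mat_apply.
  rewrite (Csum_ext_in V _ (fun z =>
    Csum V (fun u => Cmul (Cmul (Amat alpha0 G0 eta v z) (M z u)) (g u)))).
  - rewrite Csum_swap, <- (Csum_kron_l V v g HV Hv); apply Csum_ext_in; intros u Hu.
    rewrite Csum_mul_r, HM; auto.
  - intros z _; rewrite <- Csum_mul_l; apply Csum_ext_in; intros; ring.
Qed.

(* If [(I + T) m = g], the remainder [m - Σ_{k<N} (-T)^k g] equals [(-T)^N m]. *)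
Lemma remainder_succ m g N v :
  (forall v, In v V -> Cadd (m v) (born_op v m) = g v) -> In v V ->
  Csub (m v) (born_sum (S N) g v) = Copp (born_op v (fun u => Csub (m u) (born_sum N g u))).
Proof.
  intros Hm Hv; rewrite born_op_sub.
  change (born_sum (S N) g v) with (Cadd (born_sum N g v) (born_pow N g v)).
  replace (born_pow N g v)
    with (Csub (g v) (Cadd (born_sum N g v) (born_op v (born_sum N g))))
    by (rewrite born_sum_telescope; ring).
  rewrite <- (Hm v Hv); ring.
Qed.

Hypothesis Hrate : rate < 1.

Lemma born_pow_kron_le k x y : In x V -> Cmod (born_pow k (fun u => kron u y) x) <= rate ^ k.
Proof.
  intros Hx; rewrite <- (Rmult_1_r (rate ^ k)).
  apply born_pow_le; [exact Hx | lra | intros; apply Cmod_kron_le].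
Qed.

Lemma neumann_cv x y : In x V -> { l | Ccv (fun N => neumann N x y) l }.
Proof.
  intros Hx; apply (Cseries_cv (fun k => born_pow k (fun u => kron u y) x) rate 1).
  - split; [apply rate_ge0 | exact Hrate].
  - lra.
  - intros k; rewrite Rmult_1_l; now apply born_pow_kron_le.
Qed.

Lemma inverse_exists : exists M, is_inverse_on V (Amat alpha0 G0 eta) M.
Proof.
  set (M x y := match in_dec Nat.eq_dec x V with
                | left Hx => proj1_sig (neumann_cv x y Hx)
                | right _ => C0
                end).
  assert (HM : forall x y, In x V -> Ccv (fun N => neumann N x y) (M x y)).
  { intros x y Hx; unfold M; destruct (in_dec Nat.eq_dec x V) as [H|H];
      [apply proj2_sig | contradiction]. }
  assert (Hpow : forall x y, In x V -> Ccv (fun N => born_pow N (fun u => kron u y) x) C0).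
  { intros x y Hx; apply (Ccv_0_of_geometric_le _ rate 1);
      [split; [apply rate_ge0 | exact Hrate] | lra |].
    intros N; rewrite Rmult_1_l; now apply born_pow_kron_le. }
  exists M; split; intros x y Hx Hy.
  - apply (Ccv_unique (fun N => Csum V (fun z => Cmul (Amat alpha0 G0 eta x z) (neumann N z y)))).
    + apply Ccv_Csum; intros z Hz; apply Ccv_mul; [apply Ccv_const | now apply HM].
    + apply (Ccv_ext (fun N => Csub (kron x y) (born_pow N (fun u => kron u y) x))).
      * intros N; symmetry; now apply Amat_neumann.
      * now apply Ccv_sub_vanishing, Hpow.
  - apply (Ccv_unique (fun N => Csum V (fun z => Cmul (neumann N x z) (Amat alpha0 G0 eta z y)))).
    + apply Ccv_Csum; intros z Hz; apply Ccv_mul; [now apply HM | apply Ccv_const].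
    + apply (Ccv_ext (fun N => Csub (kron x y) (born_pow N (fun u => kron u y) x))).
      * intros N; symmetry; now apply neumann_Amat.
      * now apply Ccv_sub_vanishing, Hpow.
Qed.

Lemma solution_le m g Y : 0 <= Y -> (forall v, In v V -> Cmod (g v) <= Y) ->
  (forall v, In v V -> Cadd (m v) (born_op v m) = g v) ->
  forall v, In v V -> Cmod (m v) <= Y / (1 - rate).
Proof.
  intros HY Hg Hm.
  set (Mx := Rmaxl V (fun v => Cmod (m v))).
  assert (Hle : forall v, In v V -> Cmod (m v) <= Mx)
    by (intros; now apply (elem_le_Rmaxl V (fun v => Cmod (m v)))).
  assert (HMx : Mx <= Y + rate * Mx).
  { apply Rmaxl_lub.
    { apply Rplus_le_le_0_compat; [exact HY | apply Rmult_le_pos; [apply rate_ge0 | apply Rmaxl_ge0]]. }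
    intros v Hv; replace (m v) with (Csub (g v) (born_op v m)) by (rewrite <- (Hm v Hv); ring).
    eapply Rle_trans; [apply Cmod_Csub_le|].
    apply Rplus_le_compat; [auto | apply born_op_contract; auto; apply Rmaxl_ge0]. }
  intros v Hv; eapply Rle_trans; [apply Hle, Hv|].
  apply Rmult_le_reg_r with (1 - rate); [lra|].
  unfold Rdiv; rewrite Rmult_assoc, Rinv_l by lra; lra.
Qed.

Lemma remainder_le m g Y N v : 0 <= Y -> (forall v, In v V -> Cmod (m v) <= Y) ->
  (forall v, In v V -> Cadd (m v) (born_op v m) = g v) -> In v V ->
  Cmod (Csub (m v) (born_sum N g v)) <= rate ^ N * Y.
Proof.
  intros HY Hmb Hm; revert v; induction N as [|N IH]; intros v Hv.
  - unfold born_sum; simpl; replace (Csub (m v) C0) with (m v) by ring.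
    rewrite Rmult_1_l; auto.
  - rewrite remainder_succ, Cmod_Copp by assumption; simpl; rewrite Rmult_assoc.
    apply born_op_contract; auto; apply Rmult_le_pos; [apply pow_le, rate_ge0 | exact HY].
Qed.

Lemma born_remainder_le M N r s :
  (forall x y, In x V -> In y V -> Csum V (fun z => Cmul (Amat alpha0 G0 eta x z) (M z y)) = kron x y) ->
  Cmod (Csub (born_partial V alpha0 G0 eta N r s) (born_op r (mat_apply M (fun u => G0 u s))))
  <= alpha0 * lpnorm q V (fun u => Cmod (G0 r u)) * lpnorm p V (fun u => Cmod (eta u))
     * (rate ^ N * (lpnorm q V (fun u => Cmod (G0 u s)) / (1 - rate))).
Proof.
  intros HM; destruct (conj_exp_valid p q Hpq) as [_ Hq].
  set (g := fun u => G0 u s); set (Y := lpnorm q V (fun u => Cmod (G0 u s))).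
  assert (HY : 0 <= Y / (1 - rate))
    by (apply Rmult_le_pos; [apply lpnorm_ge0 | left; apply Rinv_0_lt_compat; lra]).
  assert (Hsol : forall v, In v V -> Cadd (mat_apply M g v) (born_op v (mat_apply M g)) = g v)
    by (intros; now apply mat_apply_solves).
  assert (Hmb : forall v, In v V -> Cmod (mat_apply M g v) <= Y / (1 - rate)).
  { apply (solution_le _ g); [apply lpnorm_ge0 | | exact Hsol].
    intros v Hv; apply (elem_le_lpnorm q V (fun u => Cmod (G0 u s))); auto; intros; apply Cmod_ge0. }
  rewrite born_partial_eq, <- born_op_sub.
  apply born_op_le; [apply Rmult_le_pos; [apply pow_le, rate_ge0 | exact HY]|].
  intros v Hv; rewrite Cmod_Csub_sym; now apply remainder_le with (g := g).
Qed.

Lemma born_remainder_lpnorm_le M N (R_ S_ : list nat) :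
  (forall x y, In x V -> In y V -> Csum V (fun z => Cmul (Amat alpha0 G0 eta x z) (M z y)) = kron x y) ->
  lpnorm p (list_prod R_ S_) (fun rs => Cmod (Csub (born_partial V alpha0 G0 eta N (fst rs) (snd rs))
                                              (born_op (fst rs) (mat_apply M (fun u => G0 u (snd rs))))))
  <= nu_p p q V R_ S_ alpha0 G0 * lpnorm p V (fun v => Cmod (eta v)) * rate ^ N / (1 - rate).
Proof.
  intros HM; destruct (conj_exp_valid p q Hpq) as [Hp _].
  set (K := alpha0 * lpnorm p V (fun v => Cmod (eta v)) * rate ^ N / (1 - rate)).
  assert (HK : 0 <= K).
  { apply Rmult_le_pos; [| left; apply Rinv_0_lt_compat; lra].
    apply Rmult_le_pos; [apply Rmult_le_pos; [exact Halpha | apply lpnorm_ge0]|].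
    apply pow_le, rate_ge0. }
  eapply Rle_trans.
  - apply (lpnorm_le p _ _ (fun rs => K * (lpnorm q V (fun u => Cmod (G0 (fst rs) u))
                                          * lpnorm q V (fun u => Cmod (G0 u (snd rs)))))); [exact Hp|].
    intros rs _; split; [apply Cmod_ge0|].
    eapply Rle_trans; [now apply born_remainder_le|]; right; unfold K, Rdiv; ring.
  - rewrite lpnorm_scale by (auto; intros; apply Rmult_le_pos; apply lpnorm_ge0).
    eapply Rle_trans.
    + apply Rmult_le_compat_l; [exact HK|].
      apply (lpnorm_list_prod_le p R_ S_ (fun r => lpnorm q V (fun u => Cmod (G0 r u)))
                                         (fun s => lpnorm q V (fun u => Cmod (G0 u s))));
        auto; intros; apply lpnorm_ge0.
    + right; unfold K, nu_p, Rdiv; ring.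
Qed.

End BornSeries.

Theorem proposition1
  (V dV R_ S_ : list nat) (alpha0 : R) (G0 : nat -> nat -> Cplx) (p q : ext)
  (eta : nat -> Cplx)
  (HV : NoDup V) (HdV : NoDup dV)
  (Hdisj : forall x, In x V -> ~ In x dV)
  (HRnd : NoDup R_) (HSnd : NoDup S_)
  (HR : incl R_ dV) (HS : incl S_ dV) (HRne : R_ <> []) (HSne : S_ <> [])
  (Halpha : 0 < alpha0) (Hpq : conj_exp p q)
  (Hsmall : mu_p q V alpha0 G0 * lpnorm p V (fun v => Cmod (eta v)) < 1) :
  (exists M, is_inverse_on V (Amat alpha0 G0 eta) M) /\
  forall M, is_inverse_on V (Amat alpha0 G0 eta) M ->
    (exists L : nat -> nat -> Cplx,
       Un_cv (fun N => lpnorm p (list_prod R_ S_)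
                (fun rs => Cmod (Csub (born_partial V alpha0 G0 eta N (fst rs) (snd rs))
                                      (L (fst rs) (snd rs))))) 0 /\
       (forall r s, In r R_ -> In s S_ ->
          Lambda V alpha0 G0 eta M r s = Csub (G0 r s) (L r s))) /\
    (forall N : nat, (1 <= N)%nat ->
       lpnorm p (list_prod R_ S_)
         (fun rs => Cmod (Csub (Lambda V alpha0 G0 eta M (fst rs) (snd rs))
                               (Csub (G0 (fst rs) (snd rs))
                                     (born_partial V alpha0 G0 eta N (fst rs) (snd rs)))))
       <= nu_p p q V R_ S_ alpha0 G0
          * lpnorm p V (fun v => Cmod (eta v)) ^ (S N)
          * mu_p q V alpha0 G0 ^ N
          * / (1 - mu_p q V alpha0 G0 * lpnorm p V (fun v => Cmod (eta v)))).
Proof.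
  assert (Ha : 0 <= alpha0) by lra.
  destruct (conj_exp_valid p q Hpq) as [Hp _].
  split; [exact (inverse_exists V alpha0 G0 eta p q HV Ha Hpq Hsmall)|].
  intros M [HM _].
  set (L r s := born_op V alpha0 G0 eta r (mat_apply V M (fun u => G0 u s))).
  pose proof (fun N => born_remainder_lpnorm_le V alpha0 G0 eta p q HV Ha Hpq Hsmall M N R_ S_ HM)
    as Hrem.
  set (E := lpnorm p V (fun v => Cmod (eta v))) in *; set (mu := mu_p q V alpha0 G0) in *.
  set (nu := nu_p p q V R_ S_ alpha0 G0) in *.
  assert (Hnu : 0 <= nu * E / (1 - mu * E)).
  { assert (0 <= nu) by (unfold nu, nu_p; repeat apply Rmult_le_pos; auto; apply lpnorm_ge0).
    assert (0 <= E) by apply lpnorm_ge0.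
    apply Rmult_le_pos; [nra | left; apply Rinv_0_lt_compat; lra]. }
  split.
  - exists L; split; [|reflexivity].
    apply (Un_cv_0_of_geometric_le _ (mu * E) (nu * E / (1 - mu * E)));
      [split; [apply rate_ge0; exact Ha | exact Hsmall] | exact Hnu|].
    intros N; rewrite Rabs_right by (apply Rle_ge, lpnorm_ge0).
    eapply Rle_trans; [apply Hrem | right; unfold Rdiv; ring].
  - intros N _; eapply Rle_trans.
    + apply (lpnorm_le p _ _ (fun rs => Cmod (Csub (born_partial V alpha0 G0 eta N (fst rs) (snd rs))
                                                  (L (fst rs) (snd rs))))); [exact Hp|].
      intros rs _; split; [apply Cmod_ge0|]; right.
      change (Lambda V alpha0 G0 eta M (fst rs) (snd rs))
        with (Csub (G0 (fst rs) (snd rs)) (L (fst rs) (snd rs))).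
      f_equal. generalize (L (fst rs) (snd rs)); intros. ring.
    + eapply Rle_trans; [apply Hrem|]; rewrite Rpow_mult_distr; right; simpl; unfold Rdiv; ring.
Qed.
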